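(* Let $n,m\ge2$ and $d\ge\max(n,m)-1$. Let $\mathcal U$ be a set of $n$ vectors forming an $(n-1)$-simplex ETF and $\mathcal V$ a set of $m$ vectors forming an $(m-1)$-simplex ETF, all on the unit sphere of $\mathbb R^d$. Let $\mathcal U\cup\mathcal V$ denote the collection of all $n+m$ vectors (concatenation, counted with multiplicity). Then $$\frac{1}{|\mathcal U\cup\mathcal V|\,(|\mathcal U\cup\mathcal V|-1)}\sum_{u\ne v\in\mathcal U\cup\mathcal V}u^\top v=-\frac{1}{n+m-1},$$ where the sum runs over ordered pairs of distinct members of the collection and $|\mathcal U\cup\mathcal V|=n+m$.
   Context: A set of $k$ vectors $W$ on the unit sphere of $\mathbb R^d$ is a $(k-1)$-simplex ETF if $\|w\|_2=1$ for all $w\in W$ and $w^\top w'=-\frac{1}{k-1}$ for all distinct $w,w'\in W$. *)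

From mathcomp Require Import all_boot all_order all_algebra.
Set Implicit Arguments. Unset Strict Implicit. Unset Printing Implicit Defensive.
Import Order.TTheory GRing.Theory Num.Theory.
Local Open Scope ring_scope.

Definition dotv (R : rcfType) (d : nat) (u v : 'rV[R]_d) : R := (u *m v^T) 0 0.

Definition norm2 (R : rcfType) (d : nat) (w : 'rV[R]_d) : R := Num.sqrt (dotv w w).

Definition simplex_ETF (R : rcfType) (d k : nat) (W : 'I_k -> 'rV[R]_d) : Prop :=
  (forall i, norm2 (W i) = 1) /\
  (forall i j, i != j -> dotv (W i) (W j) = - (k.-1%:R)^-1).

Definition concat_fam (R : rcfType) (d n m : nat)
  (U : 'I_n -> 'rV[R]_d) (V : 'I_m -> 'rV[R]_d) (k : 'I_(n + m)) : 'rV[R]_d :=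
  match split k with inl i => U i | inr j => V j end.

(* Both families sum to zero: for a (k-1)-simplex ETF W, |sum W|^2 = k + k(k-1) * (-1/(k-1)) = 0.
   Hence so does their concatenation F, and the off-diagonal Gram sum of F is
   |sum F|^2 - sum |F k|^2 = 0 - (n + m). *)
From mathcomp Require Import all_boot all_order all_algebra.
Set Implicit Arguments. Unset Strict Implicit. Unset Printing Implicit Defensive.
Import Order.TTheory GRing.Theory Num.Theory.
Local Open Scope ring_scope.

Section InnerProduct.
Variables (R : rcfType) (d : nat).
Implicit Types (u v w : 'rV[R]_d).

Lemma dotvE u v : dotv u v = \sum_j u 0 j * v 0 j.
Proof. by rewrite /dotv !mxE; apply: eq_bigr => j _; rewrite mxE. Qed.

Lemma dotv0l v : dotv 0 v = 0.
Proof. by rewrite /dotv mul0mx mxE. Qed.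

Lemma dotv_suml (I : finType) (P : pred I) (F : I -> 'rV[R]_d) w :
  dotv (\sum_(i | P i) F i) w = \sum_(i | P i) dotv (F i) w.
Proof.
rewrite dotvE; under eq_bigr do rewrite summxE mulr_suml.
by rewrite exchange_big; apply: eq_bigr => i _; rewrite dotvE.
Qed.

Lemma dotv_sumr (I : finType) (P : pred I) (F : I -> 'rV[R]_d) w :
  dotv w (\sum_(i | P i) F i) = \sum_(i | P i) dotv w (F i).
Proof.
rewrite dotvE; under eq_bigr do rewrite summxE mulr_sumr.
by rewrite exchange_big; apply: eq_bigr => i _; rewrite dotvE.
Qed.

Lemma dotv_ge0 w : 0 <= dotv w w.
Proof. by rewrite dotvE; apply: sumr_ge0 => j _; rewrite -expr2 sqr_ge0. Qed.

Lemma dotv_eq0 w : dotv w w = 0 -> w = 0.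
Proof.
rewrite dotvE => /psumr_eq0P w0; apply/matrixP => i j; rewrite (ord1 i) mxE.
have /eqP := w0 (fun j _ => ltac:(by rewrite -expr2 sqr_ge0)) j isT.
by rewrite mulf_eq0 orbb => /eqP.
Qed.

Lemma norm2_eq1 w : norm2 w = 1 -> dotv w w = 1.
Proof. by move=> w1; rewrite -(sqr_sqrtr (dotv_ge0 w)) -/(norm2 w) w1 expr1n. Qed.

Lemma sum_dotv_neq (I : finType) (F : I -> 'rV[R]_d) :
  \sum_k \sum_(l | l != k) dotv (F k) (F l)
  = dotv (\sum_k F k) (\sum_k F k) - \sum_k dotv (F k) (F k).
Proof.
rewrite dotv_suml -sumrB; apply: eq_bigr => k _.
by rewrite dotv_sumr [in RHS](bigD1 k) //= addrC addrK.
Qed.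

Lemma simplex_ETF_sum_eq0 k (W : 'I_k -> 'rV[R]_d) :
  (1 < k)%N -> simplex_ETF W -> \sum_i W i = 0.
Proof.
move=> k_gt1 [W1 Wij]; apply: dotv_eq0.
have k1_neq0 : k.-1%:R != 0 :> R by rewrite pnatr_eq0 -lt0n -ltnS prednK // ltnW.
rewrite dotv_suml big1 // => i _; rewrite dotv_sumr (bigD1 i) //= norm2_eq1 //.
rewrite (eq_bigr (fun=> - (k.-1%:R)^-1)) => [|j ji]; last by rewrite Wij // eq_sym.
by rewrite sumr_const cardC1 card_ord mulNrn -[X in 1 - X]mulr_natl mulfV // subrr.
Qed.

Lemma concat_fam_sum n m (U : 'I_n -> 'rV[R]_d) (V : 'I_m -> 'rV[R]_d) :
  \sum_k concat_fam U V k = \sum_i U i + \sum_j V j.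
Proof.
rewrite big_split_ord /= /concat_fam.
by congr (_ + _); apply: eq_bigr => i _; rewrite ?(unsplitK (inl _ i)) ?(unsplitK (inr _ i)).
Qed.

Lemma concat_fam_norm2 n m (U : 'I_n -> 'rV[R]_d) (V : 'I_m -> 'rV[R]_d) :
  (forall i, norm2 (U i) = 1) -> (forall j, norm2 (V j) = 1) ->
  forall k, norm2 (concat_fam U V k) = 1.
Proof. by move=> U1 V1 k; rewrite /concat_fam; case: split. Qed.

End InnerProduct.

Theorem lemmaC14 (R : rcfType) (n m d : nat)
  (Hn : (2 <= n)%N) (Hm : (2 <= m)%N) (Hd : ((maxn n m).-1 <= d)%N)
  (U : 'I_n -> 'rV[R]_d) (V : 'I_m -> 'rV[R]_d)
  (HU : simplex_ETF U) (HV : simplex_ETF V) :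
  ((n + m)%:R * ((n + m).-1)%:R)^-1 *
    (\sum_(k : 'I_(n + m)) \sum_(l : 'I_(n + m) | l != k)
        dotv (concat_fam U V k) (concat_fam U V l))
  = - (((n + m).-1)%:R)^-1.
Proof.
(* Hd only guarantees that such ETFs exist in R^d; the identity does not need it. *)
rewrite sum_dotv_neq concat_fam_sum !simplex_ETF_sum_eq0 // addr0 dotv0l sub0r.
rewrite (eq_bigr (fun=> 1)) => [|k _]; last exact/norm2_eq1/(concat_fam_norm2 HU.1 HV.1).
have nm_neq0 : (n + m)%:R != 0 :> R by rewrite pnatr_eq0 addn_eq0 negb_and -lt0n (leq_trans _ Hn).
by rewrite sumr_const card_ord invfM mulrN mulrAC mulVf // mul1r.
Qed.
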